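(* Let $A$ be an $(n-2)\times n$ integer matrix of rank $n-2$ with columns $a_1,\dots,a_n$ such that some $w\in\mathbb Q^{n-2}$ satisfies $w\cdot a_i=1$ for all $i$, and let $B=(b_{i\ell})$ be an $n\times2$ integer matrix whose columns form a $\mathbb Z$-basis of $\ker_{\mathbb Z}(A)$. Define the dual full discriminant $\tilde E_B(x_1,\dots,x_n)=\tilde{\mathcal C}_B(b_{i\ell}x_i,\ i=1,\dots,n,\ \ell=1,2)$, i.e. the dual Chow form evaluated at $y_{i\ell}=b_{i\ell}x_i$. Then $\tilde E_B$ has no monomial factors: no variable $x_i$ divides $\tilde E_B$.
   Context: $X_B\subset\mathbf P^{n-1}$ is the codimension-2 toric variety defined by the ideal $I_B\subset k[x_1,\dots,x_n]$ ($k$ of characteristic zero) generated by all binomials $x^{u_+}-x^{u_-}$ with $u=u_+-u_-\in\ker_{\mathbb Z}(A)$. With $Y=(y_{i\ell})$ an $n\times 2$ matrix of indeterminates, the dual Chow form $\tilde{\mathcal C}_B\in\mathbb Z[y_{i\ell}]$ is the irreducible polynomial (unique up to sign) vanishing exactly when the line $\{(y_{11}+ty_{12}:\cdots:y_{n1}+ty_{n2})\}$ meets $X_B$. *)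

From HB Require Import structures.
From mathcomp Require Import all_boot all_order all_algebra.
From mathcomp Require Import algC.
From mathcomp Require Import mpoly.
Set Implicit Arguments. Unset Strict Implicit. Unset Printing Implicit Defensive.
Import Order.TTheory GRing.Theory Num.Theory.
Local Open Scope ring_scope.

Definition zpos (z : int) : nat := if (0 <= z)%R then absz z else 0%N.
Definition zneg (z : int) : nat := if (z < 0)%R then absz z else 0%N.

Definition in_kerZ (m n : nat) (A : 'M[int]_(m, n)) (u : 'cV[int]_n) : Prop :=
  A *m u = 0.

Definition good_A (m : nat) (A : 'M[int]_(m, m.+2)) : Prop :=
  \rank (map_mx (intr : int -> rat) A) = m /\
  exists w : 'rV[rat]_m, w *m map_mx (intr : int -> rat) A = const_mx 1.

Definition Zbasis_ker (m n : nat) (A : 'M[int]_(m, n)) (B : 'M[int]_(n, 2)) : Prop :=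
  A *m B = 0 /\
  (forall u : 'cV[int]_n, in_kerZ A u -> exists c : 'cV[int]_2, u = B *m c) /\
  (forall c : 'cV[int]_2, B *m c = 0 -> c = 0).

(* p (a point of k^n, k = algC) lies in the affine cone over X_B, i.e. all
   binomials x^{u+} - x^{u-}, u in ker_Z(A), generating I_B vanish at p. *)
Definition in_cone_XB (m n : nat) (A : 'M[int]_(m, n)) (p : 'I_n -> algC) : Prop :=
  forall u : 'cV[int]_n, in_kerZ A u ->
    \prod_(i < n) p i ^+ zpos (u i 0) = \prod_(i < n) p i ^+ zneg (u i 0).

Definition line_meets_XB (m n : nat) (A : 'M[int]_(m, n)) (Y : 'M[algC]_(n, 2)) : Prop :=
  exists s t : algC, (s != 0 \/ t != 0) /\
    in_cone_XB A (fun i => s * Y i 0 + t * Y i 1).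

(* Variables y_{i l} of Z[y_{il}] are indexed by 'I_(n + n):
   y_{i,1} = lshift n i, y_{i,2} = rshift n i. *)
Definition yval (n : nat) (Y : 'I_n -> 'I_2 -> algC) (k : 'I_(n + n)) : algC :=
  match split k with inl i => Y i 0 | inr i => Y i 1 end.

Definition irreducible_mpoly (N : nat) (C : {mpoly int[N]}) : Prop :=
  C != 0 /\ C \isn't a GRing.unit /\
  forall f g : {mpoly int[N]}, C = f * g -> f \is a GRing.unit \/ g \is a GRing.unit.

Definition dual_chow_form (m n : nat) (A : 'M[int]_(m, n)) (C : {mpoly int[n + n]}) : Prop :=
  irreducible_mpoly C /\
  forall Y : 'M[algC]_(n, 2),
    mmap (intr : int -> algC) (yval (fun i l => Y i l)) C = 0 <-> line_meets_XB A Y.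

Definition subst_bx (n : nat) (B : 'M[int]_(n, 2)) (k : 'I_(n + n)) : {mpoly int[n]} :=
  match split k with
  | inl i => (B i 0)%:MP * 'X_i
  | inr i => (B i 1)%:MP * 'X_i
  end.

Definition dual_full_disc (n : nat) (B : 'M[int]_(n, 2)) (C : {mpoly int[n + n]}) : {mpoly int[n]} :=
  mmap (@mpolyC n int) (subst_bx B) C.

From HB Require Import structures.
From mathcomp Require Import all_boot all_order all_algebra.
From mathcomp Require Import algC.
From mathcomp Require Import mpoly.
From mathcomp Require Import zify ring.

(* If x_i divided the dual full discriminant, the dual Chow form would vanish at
   y_(l,r) = b_(l,r) x_l for every x with x_i = 0, i.e. the line of points
   x_l (b_(l,1) s + b_(l,2) t) would meet X_B.  We exhibit one such x for which it
   does not: for every (s, t) some kernel vector B d gives a binomial that is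
   nonzero on the line.  Fix a nonzero row b_j of B, with j = i unless row i
   vanishes.  If the linear form b_j . (s, t) is nonzero, a kernel vector
   B (b_k)^perp built from a suitable row k has nonzero j-th entry, and the point
   has, on the support of that vector, its only zero at j.  Otherwise (s, t) is
   proportional to (b_j)^perp, the point is proportional to
   (x_l det(b_j, b_l))_l, and the binomial of B (b_j)^perp reduces, by
   homogeneity (the columns of B sum to zero since w . a_l = 1), to its value at
   (x_l det(b_j, b_l))_l, which x is chosen to make (1, ..., 1, 2, 1, ..., 1). *)

Set Implicit Arguments. Unset Strict Implicit. Unset Printing Implicit Defensive.
Import Order.TTheory GRing.Theory Num.Theory.
Local Open Scope ring_scope.

Lemma zposBzneg (z : int) : z = (zpos z)%:Z - (zneg z)%:Z.
Proof. by case: z => [k|k]; rewrite /zpos /zneg /=; lia. Qed.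

Lemma zposN (z : int) : zpos (- z) = zneg z.
Proof. by case: z => [[|k]|k]; rewrite /zpos /zneg /=. Qed.

Lemma znegN (z : int) : zneg (- z) = zpos z.
Proof. by rewrite -[in RHS](opprK z) zposN. Qed.

Lemma zpos_gt0 (z : int) : 0 < z -> (0 < zpos z)%N.
Proof. by case: z => [[|k]|k]. Qed.

Lemma zneg_gt0 (z : int) : (0 < zneg z)%N -> z < 0.
Proof. by case: z => [k|k]; rewrite /zneg. Qed.

Lemma sum_zpos_zneg (n : nat) (u : 'I_n -> int) :
  \sum_l u l = 0 -> (\sum_l zpos (u l) = \sum_l zneg (u l))%N.
Proof.
move=> u_sum0; apply/eqP; rewrite -eqz_nat -subr_eq0 -[X in X - _]intz -[X in _ - X]intz.
rewrite !sumMz -sumrB -[X in _ == X]u_sum0; apply/eqP; apply: eq_bigr => l _.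
by rewrite !intz -zposBzneg.
Qed.

Section Binomials.
Variables (F : fieldType) (n : nat).
Implicit Types (p q : 'I_n -> F) (u : 'cV[int]_n).

Definition binomial_root p u :=
  \prod_l p l ^+ zpos (u l 0) = \prod_l p l ^+ zneg (u l 0).

Lemma binomial_rootN p u : binomial_root p (- u) <-> binomial_root p u.
Proof.
have prodN (e e' : int -> nat) : (forall z, e (- z) = e' z) ->
    \prod_l p l ^+ e ((- u) l 0) = \prod_l p l ^+ e' (u l 0).
  by move=> ee'; apply: eq_bigr => l _; rewrite mxE ee'.
by rewrite /binomial_root (prodN _ _ zposN) (prodN _ _ znegN); split=> ->.
Qed.

Lemma eq_binomial_root p q u :
  (forall l, u l 0 != 0 -> p l = q l) -> binomial_root p u <-> binomial_root q u.
Proof.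
move=> eq_pq; have eq_pow (e : int -> nat) : e 0 = 0%N ->
    \prod_l p l ^+ e (u l 0) = \prod_l q l ^+ e (u l 0).
  move=> e0; apply: eq_bigr => l _.
  by have [->|/eq_pq ->] := eqVneq (u l 0) 0; rewrite ?e0 ?expr0.
by rewrite /binomial_root !eq_pow.
Qed.

Lemma binomial_root_single_zero p u j :
  p j = 0 -> u j 0 != 0 -> (forall l, l != j -> u l 0 != 0 -> p l != 0) ->
  ~ binomial_root p u.
Proof.
wlog u_gt0 : u / 0 < u j 0 => [hwlog pj0 uj_neq0 p_neq0|pj0 _ p_neq0].
  have [uj_gt0|uj_lt0|] := ltrgt0P (u j 0); last by move/eqP: uj_neq0.
    exact: hwlog.
  rewrite -binomial_rootN; apply: hwlog; rewrite ?mxE ?oppr_gt0 ?oppr_eq0 //.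
  by move=> l; rewrite mxE oppr_eq0; apply: p_neq0.
rewrite /binomial_root (bigD1 j) //= pj0 expr0n.
case: (zpos (u j 0)) (zpos_gt0 u_gt0) => // k _.
apply/eqP; rewrite mul0r eq_sym; apply/prodf_neq0 => l _; rewrite expf_eq0 negb_and.
case: (posnP (zneg (u l 0))) => [//|/zneg_gt0 ul_lt0]; rewrite orbC p_neq0 //.
  by apply: contraTneq ul_lt0 => ->; rewrite -leNgt ltW.
exact: ltr0_neq0.
Qed.

Lemma binomial_rootZ (kap : F) p u : kap != 0 -> \sum_l u l 0 = 0 ->
  binomial_root (fun l => kap * p l) u <-> binomial_root p u.
Proof.
move=> kap_neq0 /sum_zpos_zneg sum_eq; rewrite /binomial_root.
rewrite !(eq_bigr _ (fun l _ => exprMn _ _ _)) !big_split /= !prodrXr sum_eq.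
by split=> [/(mulfI (expf_neq0 _ kap_neq0)) | ->].
Qed.

End Binomials.

Lemma not_binomial_root_bump (F : numFieldType) (n : nat) (u : 'cV[int]_n) l1 :
  u l1 0 != 0 -> ~ binomial_root (fun l => (if l == l1 then 2 else 1) : F) u.
Proof.
have prod_bump (e : int -> nat) :
    \prod_l (if l == l1 then 2 else 1 : F) ^+ e (u l 0) = 2 ^+ e (u l1 0).
  rewrite (bigD1 l1) //= eqxx big1 ?mulr1 // => l /negbTE ->; exact: expr1n.
move=> ul1_neq0; rewrite /binomial_root !prod_bump => /eqP.
rewrite -!natrX eqr_nat eqn_exp2l // => /eqP e_eq.
by move: ul1_neq0; rewrite [u l1 0]zposBzneg e_eq subrr eqxx.
Qed.

Lemma orthogonal_colinear (F : fieldType) (a b s t : F) :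
  a != 0 \/ b != 0 -> s != 0 \/ t != 0 -> a * s + b * t = 0 ->
  exists2 kap, kap != 0 & s = - kap * b /\ t = kap * a.
Proof.
move=> ab_neq0 st_neq0 /eqP; rewrite addr_eq0 => /eqP as_eq.
have [a0|a_neq0] := eqVneq a 0.
  have b_neq0 : b != 0 by case: ab_neq0; rewrite ?a0 ?eqxx.
  have t0 : t = 0.
    by apply/eqP; move/eqP: as_eq; rewrite a0 mul0r eq_sym oppr_eq0 mulf_eq0 (negbTE b_neq0).
  have s_neq0 : s != 0 by case: st_neq0; rewrite ?t0 ?eqxx.
  exists (- s / b); first by rewrite mulf_neq0 ?oppr_eq0 ?invr_eq0.
  by rewrite a0 t0 mulr0; split=> //; field.
have t_neq0 : t != 0.
  case: st_neq0 => // s_neq0; apply: contra_neq s_neq0 => t0.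
  by apply/eqP; move/eqP: as_eq; rewrite t0 mulr0 oppr0 mulf_eq0 (negbTE a_neq0).
exists (t / a); first by rewrite mulf_neq0 ?invr_eq0.
by split; [apply: (mulfI a_neq0); rewrite as_eq | ]; field.
Qed.

Section KernelBasis.
Variables (F : numFieldType) (n : nat) (B : 'M[int]_(n, 2)).
Hypothesis B_inj : forall c : 'cV[int]_2, B *m c = 0 -> c = 0.
Hypothesis B_colsum : forall r, \sum_l B l r = 0.

Definition nonzero_row l := (B l 0 != 0) || (B l 1 != 0).

Definition rowdet k l := B k 0 * B l 1 - B k 1 * B l 0.

Definition row_perp k : 'cV[int]_2 := \col_r (if r == 0 then - B k 1 else B k 0).

Definition row_form (s t : F) l := (B l 0)%:~R * s + (B l 1)%:~R * t.

Lemma mulmx_col2 (d : 'cV[int]_2) l : (B *m d) l 0 = B l 0 * d 0 0 + B l 1 * d 1 0.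
Proof.
rewrite !mxE big_ord_recl big_ord1.
by congr (B l _ * _ + B l _ * d _ 0); apply: val_inj.
Qed.

Lemma mulmx_row_perp k l : (B *m row_perp k) l 0 = rowdet k l.
Proof. by rewrite mulmx_col2 !mxE /= /rowdet; ring. Qed.

Lemma rowdetC k l : rowdet k l = - rowdet l k.
Proof. by rewrite /rowdet; ring. Qed.

Lemma rowdetxx k : rowdet k k = 0.
Proof. by rewrite /rowdet mulrC subrr. Qed.

Lemma rowdet_zero_row k l : ~~ nonzero_row l -> rowdet k l = 0.
Proof.
by rewrite /rowdet negb_or !negbK => /andP[/eqP-> /eqP->]; rewrite !mulr0 subrr.
Qed.

Lemma row_form_zero_row s t l : ~~ nonzero_row l -> row_form s t l = 0.
Proof.
by rewrite /row_form negb_or !negbK => /andP[/eqP-> /eqP->]; rewrite !mul0r addr0.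
Qed.

Lemma exists_nonzero_row : exists j, nonzero_row j.
Proof.
apply/existsP; apply: contraT; rewrite negb_exists => /forallP all0.
have /B_inj/matrixP/(_ 0 0) : B *m \col_r (if r == 0 then 1 else 0) = 0.
  apply/matrixP => l r; rewrite ord1 mulmx_col2 !mxE /=.
  by move: (all0 l); rewrite negb_or !negbK => /andP[/eqP-> /eqP->]; rewrite mul0r add0r mul0r.
by rewrite !mxE.
Qed.

Lemma exists_rowdet_neq0 k : nonzero_row k -> exists l, rowdet k l != 0.
Proof.
move=> nz_k; apply/existsP; apply: contraTT nz_k; rewrite negb_exists => /forallP all0.
have /B_inj/matrixP perp0 : B *m row_perp k = 0.
  by apply/matrixP => l r; rewrite ord1 mulmx_row_perp mxE; apply/eqP/negPn.
by move: (perp0 0 0) (perp0 1 0); rewrite !mxE /= => /eqP; rewrite oppr_eq0 negb_or => -> /eqP->.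
Qed.

Lemma row_form_rowdet s t k : s != 0 \/ t != 0 -> nonzero_row k -> row_form s t k = 0 ->
  exists2 kap, kap != 0 & forall l, row_form s t l = kap * (rowdet k l)%:~R.
Proof.
move=> st_neq0 nz_k form_k0.
have nz_k' : (B k 0)%:~R != 0 :> F \/ (B k 1)%:~R != 0 :> F.
  by rewrite !intr_eq0; case/orP: nz_k; [left | right].
have [kap kap_neq0 [-> ->]] := orthogonal_colinear nz_k' st_neq0 form_k0.
by exists kap => // l; rewrite /row_form /rowdet rmorphB !rmorphM /=; ring.
Qed.

Lemma exists_rowdet_off_form_zeros s t j : s != 0 \/ t != 0 -> row_form s t j != 0 ->
  exists2 k, rowdet k j != 0 & forall l, rowdet k l != 0 -> row_form s t l != 0.
Proof.
move=> st_neq0 form_j.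
pose form_zero_row k := nonzero_row k && (row_form s t k == 0).
have [k /andP[nz_k /eqP form_k0]|form_nz] := pickP form_zero_row.
  have [kap kap_neq0 formE] := row_form_rowdet st_neq0 nz_k form_k0.
  exists k; last by move=> l rowdet_l; rewrite formE mulf_neq0 // intr_eq0.
  by move: form_j; rewrite formE mulf_eq0 intr_eq0 negb_or => /andP[].
have nz_j : nonzero_row j by apply: contraNT form_j => /row_form_zero_row ->.
have [l1 rowdet_l1] := exists_rowdet_neq0 nz_j.
exists l1; first by rewrite rowdetC oppr_eq0.
move=> l rowdet_l.
have nz_l : nonzero_row l by apply: contraNT rowdet_l => /rowdet_zero_row ->.
by move: (form_nz l); rewrite /form_zero_row nz_l => /negbT.
Qed.

Lemma sum_rowdet k : \sum_l rowdet k l = 0.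
Proof. by rewrite sumrB -!mulr_sumr !B_colsum !mulr0 subrr. Qed.

Section TestPoint.
Variables (i j l1 : 'I_n).
Hypotheses (nz_j : nonzero_row j) (j_pivot : j = i \/ ~~ nonzero_row i).
Hypothesis rowdet_l1 : rowdet j l1 != 0.

(* Off i and j, x_l det(b_j, b_l) is 1, except 2 at l1; x_l <> 0 even when
   det(b_j, b_l) = 0, as needed in the generic case. *)
Definition test_point l : F :=
  if (l == i) || (l == j) then 0
  else if rowdet j l == 0 then 1
  else (if l == l1 then 2 else 1) / (rowdet j l)%:~R.

Lemma rowdet_pivot_i : rowdet j i = 0.
Proof. by case: j_pivot => [<-|/rowdet_zero_row]; [exact: rowdetxx | apply]. Qed.

Lemma test_point_i : test_point i = 0.
Proof. by rewrite /test_point eqxx. Qed.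

Lemma test_point_j : test_point j = 0.
Proof. by rewrite /test_point eqxx orbT. Qed.

Lemma test_point_neq0 l : l != i -> l != j -> test_point l != 0.
Proof.
rewrite /test_point => /negbTE-> /negbTE->; case: ifP => [_|/negbT rowdet_l].
  exact: oner_neq0.
by rewrite mulf_neq0 ?invr_eq0 ?intr_eq0 //; case: ifP; rewrite ?pnatr_eq0 ?oner_eq0.
Qed.

Lemma test_point_rowdet l :
  rowdet j l != 0 -> test_point l * (rowdet j l)%:~R = if l == l1 then 2 else 1.
Proof.
move=> rowdet_l; have l_neq_i : l != i by apply: contra_neq rowdet_l => ->; exact: rowdet_pivot_i.
have l_neq_j : l != j by apply: contra_neq rowdet_l => ->; exact: rowdetxx.
by rewrite /test_point (negbTE l_neq_i) (negbTE l_neq_j) (negbTE rowdet_l) divfK ?intr_eq0.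
Qed.

Lemma test_line_off_cone_degenerate s t : s != 0 \/ t != 0 -> row_form s t j = 0 ->
  ~ binomial_root (fun l => test_point l * row_form s t l) (B *m row_perp j).
Proof.
move=> st_neq0 form_j0.
have [kap kap_neq0 formE] := row_form_rowdet st_neq0 nz_j form_j0.
suff : ~ binomial_root (fun l => kap * (if l == l1 then 2 else 1)) (B *m row_perp j).
  apply: contra_not; apply: (iffLR (eq_binomial_root _)) => l.
  rewrite mulmx_row_perp => rowdet_l.
  by rewrite formE mulrCA test_point_rowdet.
rewrite binomial_rootZ //; last by under eq_bigr do rewrite mulmx_row_perp; exact: sum_rowdet.
by apply: not_binomial_root_bump; rewrite mulmx_row_perp.
Qed.

Lemma test_line_off_cone_generic s t : s != 0 \/ t != 0 -> row_form s t j != 0 ->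
  exists d, ~ binomial_root (fun l => test_point l * row_form s t l) (B *m d).
Proof.
move=> st_neq0 form_j; have [k rowdet_kj form_nz] := exists_rowdet_off_form_zeros st_neq0 form_j.
exists (row_perp k); apply: (@binomial_root_single_zero _ _ _ _ j).
- by rewrite test_point_j mul0r.
- by rewrite mulmx_row_perp.
move=> l l_neq_j; rewrite mulmx_row_perp => rowdet_kl.
rewrite mulf_neq0 ?form_nz // test_point_neq0 //.
case: j_pivot => [ji|z_i]; first by rewrite -ji.
by apply: contra_neq rowdet_kl => ->; exact: rowdet_zero_row.
Qed.

Lemma test_line_off_cone s t : s != 0 \/ t != 0 ->
  exists d, ~ binomial_root (fun l => test_point l * row_form s t l) (B *m d).
Proof.
move=> st_neq0; have [form_j0|form_j] := eqVneq (row_form s t j) 0.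
  by exists (row_perp j); exact: test_line_off_cone_degenerate.
exact: test_line_off_cone_generic.
Qed.

End TestPoint.

Lemma exists_line_off_cone i :
  exists2 x : 'I_n -> F, x i = 0 & forall s t, s != 0 \/ t != 0 ->
    exists d, ~ binomial_root (fun l => x l * row_form s t l) (B *m d).
Proof.
have [j nz_j j_pivot] : exists2 j, nonzero_row j & j = i \/ ~~ nonzero_row i.
  have [nz_i|z_i] := boolP (nonzero_row i); first by exists i; [|left].
  by have [j nz_j] := exists_nonzero_row; exists j; [|right].
have [l1 rowdet_l1] := exists_rowdet_neq0 nz_j.
exists (test_point i j l1); first exact: test_point_i.
by move=> s t; apply: test_line_off_cone.
Qed.

End KernelBasis.

Lemma kernel_colsum_eq0 (m n p : nat) (A : 'M[int]_(m, n)) (B : 'M[int]_(n, p))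
    (w : 'rV[rat]_m) :
  w *m map_mx intr A = const_mx 1 -> A *m B = 0 -> forall r, \sum_l B l r = 0.
Proof.
move=> wA1 AB0 r; have := congr1 (mulmx^~ (map_mx intr B)) wA1.
rewrite -mulmxA -map_mxM AB0 map_mx0 mulmx0 => /matrixP/(_ 0 r).
rewrite !mxE => /esym/eqP; under eq_bigr do rewrite !mxE mul1r.
by rewrite -rmorph_sum intr_eq0 => /eqP.
Qed.

Lemma eq_mmap (N : nat) (R S : nzRingType) (f : R -> S) (h1 h2 : 'I_N -> S) p :
  h1 =1 h2 -> mmap f h1 p = mmap f h2 p.
Proof. by move=> eq_h; apply: eq_bigr => mo _; rewrite (mmap1_eq _ eq_h). Qed.

Lemma mmap_mmapC (N K : nat) (R : nzRingType) (S : comNzRingType) (f : {rmorphism R -> S})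
    (g : 'I_K -> {mpoly R[N]}) (x : 'I_N -> S) (p : {mpoly R[K]}) :
  mmap f x (mmap (@mpolyC N R) g p) = mmap f (fun k => mmap f x (g k)) p.
Proof.
rewrite [mmap _ g p]/mmap raddf_sum /= [RHS]/mmap; apply: eq_bigr => mo _.
rewrite rmorphM /= mmapC rmorph_prod; congr (_ * _).
by apply: eq_bigr => k _; rewrite rmorphXn.
Qed.

Lemma eval_dual_full_disc (n : nat) (B : 'M[int]_(n, 2)) (C : {mpoly int[n + n]})
    (x : 'I_n -> algC) :
  mmap intr x (dual_full_disc B C) = mmap intr (yval (fun l r => (B l r)%:~R * x l)) C.
Proof.
rewrite mmap_mmapC; apply: eq_mmap => k; rewrite /subst_bx /yval.
by case: split => l; rewrite rmorphM /= mmapC mmapX mmap1U.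
Qed.

Theorem lemma3p3 (m : nat) (A : 'M[int]_(m, m.+2)) (B : 'M[int]_(m.+2, 2))
  (C : {mpoly int[m.+2 + m.+2]}) :
  good_A A -> Zbasis_ker A B -> dual_chow_form A C ->
  forall i : 'I_m.+2,
    ~ (exists q : {mpoly int[m.+2]}, dual_full_disc B C = 'X_i * q).
Proof.
move=> [_ [w wA1]] [AB0 [_ B_inj]] [_ chowP] i [q E_eq].
have [x xi0 x_off] := exists_line_off_cone algC B_inj (kernel_colsum_eq0 wA1 AB0) i.
pose Y : 'M[algC]_(m.+2, 2) := \matrix_(l, r) ((B l r)%:~R * x l).
have [s [t [st_neq0 Y_meets]]] : line_meets_XB A Y.
  apply/chowP; rewrite (@eq_mmap _ _ _ _ _ (yval (fun l r => (B l r)%:~R * x l))).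
    by rewrite -eval_dual_full_disc E_eq rmorphM /= mmapX mmap1U xi0 mul0r.
  by move=> k; rewrite /yval; case: split => l; rewrite mxE.
have [d off_d] := x_off s t st_neq0.
have Y_root : binomial_root (fun l => s * Y l 0 + t * Y l 1) (B *m d).
  by apply: Y_meets; rewrite /in_kerZ mulmxA AB0 mul0mx.
apply: off_d; apply: (iffLR (eq_binomial_root _)) Y_root => l _.
by rewrite !mxE /row_form; ring.
Qed.
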